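(* Assume $A$ is good. Then the set $\{w\in\Sigma: I^*(w)<\infty\}$ is countable. Consequently $A$ satisfies the countable condition: the set of all $w$ such that $(x,w)$ is an optimal pair for some $x\in\Sigma$ is countable.
   Context: $\Sigma=\{0,1\}^{\mathbb N}$, $\sigma$ the shift. $A^*$ is the Hölder dual potential of a Hölder $A$ via an involution kernel $W(w,x)$ ($A^*(w)=A(\tau_wx)+W(\sigma w,\tau_wx)-W(w,x)$, $\tau_w(x)=(w_0,x_0,x_1,\dots)$), normalized with $m(A)=m(A^* )=0$. $V^*$ is a calibrated subaction for $A^*$, $R^*(w)=V^*(\sigma w)-V^*(w)-A^*(w)\ge0$, $I^*(w)=\sum_{n\ge0}R^*(\sigma^nw)\in[0,\infty]$. Optimal pairs: with $V$ a calibrated subaction for $A$ and $W$ normalized so that $V(x)=\sup_w[W(w,x)-V^*(w)-I^*(w)]$, $(x,w)$ is optimal iff $V(x)=W(w,x)-V^*(w)-I^*(w)$. Assume the maximizing probability of $A^*$ is unique and supported on a periodic orbit $M$; $P=\{w\notin M:\sigma w\in M\}$; $A$ is good if $R^*>0$ on $P$. *)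

From Stdlib Require Import Reals Lra List.
Import ListNotations.
Open Scope R_scope.

(** The full shift Sigma = {0,1}^N, with 0 = false, 1 = true. *)
Definition Sigma := nat -> bool.

Definition shift (w : Sigma) : Sigma := fun i => w (S i).
Definition shiftn (k : nat) (w : Sigma) : Sigma := fun i => w (k + i)%nat.
Definition tau (w x : Sigma) : Sigma :=
  fun i => match i with O => w O | S j => x j end.
Definition cons_sym (a : bool) (y : Sigma) : Sigma :=
  fun i => match i with O => a | S j => y j end.

(** x and y agree on the first n coordinates, i.e. d(x,y) <= 2^{-n} for the
    standard metric d(x,y) = 2^{-min{k : x_k <> y_k}}. *)
Definition agree (n : nat) (x y : Sigma) : Prop :=
  forall k, (k < n)%nat -> x k = y k.

(** Hoelder continuity w.r.t. d: |f x - f y| <= C d(x,y)^alpha. *)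
Definition Holder (f : Sigma -> R) : Prop :=
  exists C alpha, 0 < alpha /\
    forall n x y, agree n x y -> Rabs (f x - f y) <= C * Rpower (/2) (INR n * alpha).

Definition continuous_S (f : Sigma -> R) : Prop :=
  forall x eps, 0 < eps -> exists n, forall y, agree n x y -> Rabs (f y - f x) < eps.

Definition involution_kernel (A Astar : Sigma -> R) (W : Sigma -> Sigma -> R) : Prop :=
  forall w x, Astar w = A (tau w x) + W (shift w) (tau w x) - W w x.

(** Calibrated subaction (for a normalized potential, m(f) = 0):
    V(y) = max_{sigma z = y} [ f(z) + V(z) ], V continuous. *)
Definition calibrated_subaction (f V : Sigma -> R) : Prop :=
  continuous_S V /\
  forall y, V y = Rmax (f (cons_sym false y) + V (cons_sym false y))
                        (f (cons_sym true y) + V (cons_sym true y)).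

(** Borel probability measures on Sigma, represented (Caratheodory /
    Kolmogorov) by their values on cylinder sets [s] = {z : z starts with s}. *)
Definition prefix (s : list bool) (z : Sigma) : Prop :=
  forall k, (k < length s)%nat -> nth k s false = z k.

Definition is_probability (nu : list bool -> R) : Prop :=
  nu [] = 1 /\ (forall s, 0 <= nu s) /\
  (forall s, nu s = nu (s ++ [false]) + nu (s ++ [true])).

(** sigma-invariance: nu(sigma^{-1}[s]) = nu([0s]) + nu([1s]) = nu([s]). *)
Definition is_invariant_prob (nu : list bool -> R) : Prop :=
  is_probability nu /\ (forall s, nu s = nu (false :: s) + nu (true :: s)).

Fixpoint words (n : nat) : list (list bool) :=
  match n with
  | O => [ [] ]
  | S m => flat_map (fun s => [s ++ [false]; s ++ [true]]) (words m)
  end.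

Definition ext (s : list bool) : Sigma := fun k => nth k s false.

(** Riemann sums over cylinders of length n; for continuous f they converge
    to the integral of f. *)
Definition riemann_sum (nu : list bool -> R) (f : Sigma -> R) (n : nat) : R :=
  fold_right Rplus 0 (map (fun s => nu s * f (ext s)) (words n)).

Definition integral_is (nu : list bool -> R) (f : Sigma -> R) (l : R) : Prop :=
  Un_cv (riemann_sum nu f) l.

Definition max_ergodic_value (f : Sigma -> R) (m : R) : Prop :=
  is_lub (fun l => exists nu, is_invariant_prob nu /\ integral_is nu f l) m.

Definition maximizing_prob (f : Sigma -> R) (m : R) (nu : list bool -> R) : Prop :=
  is_invariant_prob nu /\ integral_is nu f m.

Definition periodic (p : Sigma) (n : nat) : Prop :=
  (0 < n)%nat /\ forall i, shiftn n p i = p i.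
Definition in_orbit (p z : Sigma) : Prop := exists k, forall i, z i = shiftn k p i.

(** nu is supported on the set M: nu(Sigma \ M) = 0, i.e. every cylinder of
    positive measure meets (the closed set) M. *)
Definition supported_on (nu : list bool -> R) (M : Sigma -> Prop) : Prop :=
  forall s, 0 < nu s -> exists z, M z /\ prefix s z.

Definition Rstar (Astar Vstar : Sigma -> R) (w : Sigma) : R :=
  Vstar (shift w) - Vstar w - Astar w.

Definition Istar_is (Astar Vstar : Sigma -> R) (w : Sigma) (l : R) : Prop :=
  infinite_sum (fun n => Rstar Astar Vstar (shiftn n w)) l.

Definition Istar_finite (Astar Vstar : Sigma -> R) (w : Sigma) : Prop :=
  exists l, Istar_is Astar Vstar w l.

(** (x,w) optimal pair: V(x) = W(w,x) - V*(w) - I*(w) (forces I*(w) < oo). *)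
Definition optimal_pair (Astar V Vstar : Sigma -> R) (W : Sigma -> Sigma -> R)
  (x w : Sigma) : Prop :=
  exists l, Istar_is Astar Vstar w l /\ V x = W w x - Vstar w - l.

(** Normalization of W: V(x) = sup_w [W(w,x) - V*(w) - I*(w)]
    (terms with I*(w) = +oo contribute -oo and are omitted). *)
Definition W_normalized (Astar V Vstar : Sigma -> R) (W : Sigma -> Sigma -> R) : Prop :=
  forall x, is_lub (fun r => exists w l, Istar_is Astar Vstar w l /\
                                         r = W w x - Vstar w - l) (V x).

Definition countable_set (S : Sigma -> Prop) : Prop :=
  exists f : nat -> Sigma, forall w, S w -> exists n, f n = w.

(* Let I*(w) < oo, so that R*(sigma^n w) -> 0, and suppose that sigma^n w never lands in
   the periodic orbit M.  Call a point near M if its first per + 1 symbols are those of a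
   point of M; points that stay near M shadow M, so sigma^n w is far from M infinitely often.
   An orbit point that is far from M but whose next n0 + 1 iterates are near M lies within
   2^-n0 of the finite set P of entry points of M, where R* >= c > 0 because A is good.  Once
   R* < c along the orbit this cannot happen, so the far times have bounded gaps and hence
   positive density, and a limit point nu of the empirical measures of w charges the far
   cylinders.  But nu is invariant and int A* dnu = lim (1/N) sum_{i<N} A*(sigma^i w) = 0,
   since these Birkhoff sums telescope through V* up to the partial sums of I*.  So nu is
   maximizing, hence supported on M: a contradiction.  Therefore {I* < oo} lies in the
   countable preorbit of M, and so does every w of an optimal pair. *)

From Stdlib Require Import Reals List.
From Stdlib Require Import Lra Lia Classical ClassicalEpsilon FunctionalExtensionality
  Wf_nat Cantor PArith Rtopology.
Import ListNotations.
Open Scope R_scope.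

Definition take (n : nat) (z : Sigma) : list bool := map z (seq 0 n).

Lemma length_take n z : length (take n z) = n.
Proof. unfold take. rewrite length_map, length_seq. reflexivity. Qed.

Lemma nth_take n z k : (k < n)%nat -> nth k (take n z) false = z k.
Proof.
  intros Hk. unfold take.
  rewrite (nth_indep _ false (z 0%nat)) by (rewrite length_map, length_seq; lia).
  rewrite map_nth, seq_nth by lia. reflexivity.
Qed.

Lemma take_S n z : take (S n) z = take n z ++ [z n].
Proof. unfold take. rewrite seq_S, map_app. reflexivity. Qed.

Lemma prefix_take n z q : prefix (take n z) q <-> agree n z q.
Proof.
  unfold prefix, agree. rewrite length_take. split; intros H k Hk.
  - rewrite <- (nth_take n z k Hk). apply H; auto.
  - rewrite nth_take by auto. apply H; auto.
Qed.

Lemma prefix_snoc s b x : prefix (s ++ [b]) x <-> prefix s x /\ x (length s) = b.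
Proof.
  split.
  - intros H. split.
    + intros k Hk. rewrite <- (H k) by (rewrite length_app; simpl; lia).
      rewrite app_nth1; auto.
    + rewrite <- (H (length s)) by (rewrite length_app; simpl; lia).
      rewrite app_nth2, Nat.sub_diag by lia. reflexivity.
  - intros [H Hb] k Hk. rewrite length_app in Hk. simpl in Hk.
    destruct (Nat.lt_ge_cases k (length s)).
    + rewrite app_nth1 by auto. apply H; auto.
    + replace k with (length s) by lia. rewrite app_nth2, Nat.sub_diag by lia. auto.
Qed.

Lemma prefix_cons b s x : prefix (b :: s) x <-> x 0%nat = b /\ prefix s (shift x).
Proof.
  split.
  - intros H. split.
    + symmetry. apply (H 0%nat). simpl; lia.
    + intros k Hk. apply (H (S k)). simpl; lia.
  - intros [H0 H] [|k] Hk; simpl; auto. apply H. simpl in Hk; lia.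
Qed.

Lemma shiftn_0 w : shiftn 0 w = w.
Proof. reflexivity. Qed.

Lemma shift_shiftn i w : shift (shiftn i w) = shiftn (S i) w.
Proof. apply functional_extensionality; intro j. unfold shift, shiftn. f_equal. lia. Qed.

Lemma shiftn_shiftn i j w : shiftn i (shiftn j w) = shiftn (j + i) w.
Proof. apply functional_extensionality; intro k. unfold shiftn. f_equal. lia. Qed.

Lemma cons_sym_shift w : cons_sym (w 0%nat) (shift w) = w.
Proof. apply functional_extensionality; intros [|k]; reflexivity. Qed.

Lemma agree_sym n x y : agree n x y -> agree n y x.
Proof. intros H k Hk. symmetry; auto. Qed.

Lemma agree_le m n x y : (m <= n)%nat -> agree n x y -> agree m x y.
Proof. intros Hm H k Hk. apply H. lia. Qed.

Lemma agree_shift n x y : agree (S n) x y -> agree n (shift x) (shift y).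
Proof. intros H k Hk. apply (H (S k)). lia. Qed.

Fixpoint list_of_pos (p : positive) : list bool :=
  match p with
  | xH => []
  | xO q => false :: list_of_pos q
  | xI q => true :: list_of_pos q
  end.

Fixpoint pos_of_list (l : list bool) : positive :=
  match l with
  | [] => xH
  | false :: t => xO (pos_of_list t)
  | true :: t => xI (pos_of_list t)
  end.

Lemma pos_of_listK l : list_of_pos (pos_of_list l) = l.
Proof. induction l as [|[|] t IH]; simpl; congruence. Qed.

Definition word_of_nat (n : nat) : list bool := list_of_pos (Pos.of_succ_nat n).

Lemma word_of_nat_surj s : exists n, word_of_nat n = s.
Proof.
  exists (pred (Pos.to_nat (pos_of_list s))). unfold word_of_nat.
  rewrite (SuccNat2Pos.inv _ (pos_of_list s)); [apply pos_of_listK|].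
  pose proof (Pos2Nat.is_pos (pos_of_list s)). lia.
Qed.

Definition concat_word (s : list bool) (y : Sigma) : Sigma :=
  fun i => if Nat.ltb i (length s) then nth i s false else y (i - length s)%nat.

Lemma concat_take_shiftn N w : concat_word (take N w) (shiftn N w) = w.
Proof.
  apply functional_extensionality; intro i. unfold concat_word. rewrite length_take.
  destruct (Nat.ltb_spec i N).
  - apply nth_take; auto.
  - unfold shiftn. f_equal. lia.
Qed.

Lemma in_orbit_eq p q : in_orbit p q -> exists a, q = shiftn a p.
Proof. intros [a H]. exists a. apply functional_extensionality; auto. Qed.

Lemma shiftn_in_orbit a p : in_orbit p (shiftn a p).
Proof. exists a. reflexivity. Qed.

Lemma in_orbit_shift p q : in_orbit p q -> in_orbit p (shift q).
Proof.
  intros H. destruct (in_orbit_eq _ _ H) as [a ->]. rewrite shift_shiftn. apply shiftn_in_orbit.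
Qed.

Lemma countable_preorbit p (S : Sigma -> Prop) :
  (forall w, S w -> exists N, in_orbit p (shiftn N w)) -> countable_set S.
Proof.
  intros H.
  exists (fun n => let (a, b) := Cantor.of_nat n in concat_word (word_of_nat a) (shiftn b p)).
  intros w Hw. destruct (H w Hw) as [N HN]. destruct (in_orbit_eq _ _ HN) as [b Hb].
  destruct (word_of_nat_surj (take N w)) as [a Ha].
  exists (Cantor.to_nat (a, b)). rewrite Cantor.cancel_of_to, Ha, <- Hb.
  apply concat_take_shiftn.
Qed.
Section PeriodicOrbit.

Variables (p : Sigma) (per : nat).
Hypothesis Hper : periodic p per.

Lemma in_orbit_periodic q : in_orbit p q -> forall i, q (per + i)%nat = q i.
Proof.
  intros Hq i. destruct (in_orbit_eq _ _ Hq) as [a ->]. unfold shiftn.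
  replace (a + (per + i))%nat with (per + (a + i))%nat by lia.
  apply (proj2 Hper).
Qed.

Lemma in_orbit_lt_period q : in_orbit p q -> exists a, (a < per)%nat /\ q = shiftn a p.
Proof.
  intros Hq. destruct (in_orbit_eq _ _ Hq) as [a ->]. destruct Hper as [Hpos Hp].
  exists (a mod per)%nat. split; [apply Nat.mod_upper_bound; lia|].
  apply functional_extensionality; intro i. unfold shiftn.
  rewrite (Nat.div_mod_eq a per) at 1.
  induction (a / per)%nat as [|m IH].
  - f_equal. lia.
  - rewrite <- IH.
    replace (per * S m + a mod per + i)%nat with (per + (per * m + a mod per + i))%nat by lia.
    apply Hp.
Qed.

Lemma in_orbit_agree_eq q1 q2 :
  in_orbit p q1 -> in_orbit p q2 -> agree per q1 q2 -> q1 = q2.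
Proof.
  intros H1 H2 Hag. apply functional_extensionality.
  intro i. induction i as [i IH] using lt_wf_ind.
  destruct (Nat.lt_ge_cases i per) as [Hi|Hi]; [apply Hag; auto|].
  replace i with (per + (i - per))%nat by lia.
  rewrite (in_orbit_periodic q1 H1), (in_orbit_periodic q2 H2).
  apply IH. destruct Hper. lia.
Qed.

Definition near_orbit (k : nat) (z : Sigma) : Prop := exists q, in_orbit p q /\ agree k z q.

(* As [k > per], orbit points agreeing on their first [k - 1] symbols coincide, so the
   orbit points tracked by [z, shift z, ...] are successive shifts of one another. *)
Lemma near_orbit_shadowing k L z q : (per < k)%nat -> in_orbit p q -> agree k z q ->
  (forall i, (i <= L)%nat -> near_orbit k (shiftn i z)) -> agree (L + k) z q.
Proof.
  intros Hk. revert z q. induction L as [|L IH]; intros z q Hq Hzq Hnear; [exact Hzq|].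
  destruct (Hnear 1%nat ltac:(lia)) as [q' [Hq' Hzq']].
  assert (Hq'_eq : shift q = q').
  { apply in_orbit_agree_eq; [apply in_orbit_shift; auto | auto |].
    intros j Hj. specialize (Hzq (S j) ltac:(lia)). specialize (Hzq' j ltac:(lia)).
    unfold shiftn in Hzq'. unfold shift. simpl in Hzq'. congruence. }
  assert (Hshift : agree (L + k) (shift z) (shift q)).
  { apply IH.
    - apply in_orbit_shift; auto.
    - rewrite Hq'_eq. exact Hzq'.
    - intros i Hi. exact (Hnear (S i) ltac:(lia)). }
  intros [|j] Hj; [apply Hzq; lia|]. apply (Hshift j). lia.
Qed.

Lemma eventually_near_orbit k w N : (per < k)%nat ->
  (forall i, (N <= i)%nat -> near_orbit k (shiftn i w)) -> in_orbit p (shiftn N w).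
Proof.
  intros Hk Hnear. destruct (Hnear N (le_n _)) as [q [Hq Hag]].
  replace (shiftn N w) with q; [exact Hq|].
  symmetry. apply functional_extensionality; intro i.
  apply (near_orbit_shadowing k i (shiftn N w) q Hk Hq Hag); [|lia].
  intros j _. rewrite shiftn_shiftn. apply Hnear. lia.
Qed.

Lemma entry_point_of_return k n z : (per < k)%nat -> ~ near_orbit k z ->
  (forall i, (i <= n)%nat -> near_orbit k (shiftn (S i) z)) ->
  exists q b, in_orbit p q /\ ~ in_orbit p (cons_sym b q) /\ agree (S (n + k)) z (cons_sym b q).
Proof.
  intros Hk Hfar Hnear.
  destruct (Hnear 0%nat ltac:(lia)) as [q [Hq Hzq]].
  assert (Hshadow : agree (n + k) (shift z) q)
    by exact (near_orbit_shadowing k n (shift z) q Hk Hq Hzq Hnear).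
  assert (Hag : agree (S (n + k)) z (cons_sym (z 0%nat) q)).
  { intros [|j] Hj; [reflexivity|]. apply (Hshadow j). lia. }
  exists q, (z 0%nat). repeat split; auto.
  intros Hin. apply Hfar. exists (cons_sym (z 0%nat) q). split; auto.
  apply (agree_le k (S (n + k))); auto. lia.
Qed.

Definition orbit_preimages : list Sigma :=
  flat_map (fun a => [cons_sym false (shiftn a p); cons_sym true (shiftn a p)]) (seq 0 per).

Lemma cons_sym_in_orbit_preimages q b : in_orbit p q -> In (cons_sym b q) orbit_preimages.
Proof.
  intros Hq. destruct (in_orbit_lt_period q Hq) as [a [Ha ->]].
  apply in_flat_map. exists a. split; [apply in_seq; lia|]. destruct b; simpl; auto.
Qed.

End PeriodicOrbit.

Lemma Rpower_half_lt_1 a : 0 < a -> 0 < Rpower (/2) a < 1.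
Proof.
  intros Ha. unfold Rpower. split; [apply exp_pos|].
  rewrite <- exp_0. apply exp_increasing. rewrite ln_Rinv by lra.
  assert (0 < ln 2) by (rewrite <- ln_1; apply ln_increasing; lra).
  nra.
Qed.

Lemma Holder_uniformly_continuous f : Holder f -> forall eps, 0 < eps ->
  exists n, forall x y, agree n x y -> Rabs (f x - f y) < eps.
Proof.
  intros [C [al [Hal Hf]]] eps Heps.
  set (r := Rpower (/2) al).
  assert (Hr : 0 < r < 1) by apply Rpower_half_lt_1, Hal.
  assert (HC : 0 < Rabs C + 1) by (pose proof (Rabs_pos C); lra).
  destruct (pow_lt_1_zero r ltac:(rewrite Rabs_right; lra) (eps / (Rabs C + 1)))
    as [n Hn]; [apply Rdiv_lt_0_compat; lra|].
  exists n. intros x y Hxy.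
  assert (Hrn : Rpower (/2) (INR n * al) = r ^ n).
  { unfold r. rewrite <- Rpower_pow by exact (proj1 Hr). rewrite Rpower_mult. f_equal. ring. }
  specialize (Hf n x y Hxy). rewrite Hrn in Hf.
  assert (Hpow : 0 <= r ^ n) by (apply pow_le; lra).
  specialize (Hn n (le_n n)). rewrite Rabs_right in Hn by lra.
  apply (Rmult_lt_compat_l (Rabs C + 1)) in Hn; [|lra].
  replace ((Rabs C + 1) * (eps / (Rabs C + 1))) with eps in Hn by (field; lra).
  pose proof (Rle_abs C). nra.
Qed.

Lemma Holder_continuous f : Holder f -> continuous_S f.
Proof.
  intros Hf x eps Heps. destruct (Holder_uniformly_continuous f Hf eps Heps) as [n Hn].
  exists n. intros y Hy. rewrite Rabs_minus_sym. apply Hn, Hy.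
Qed.

Definition unbounded_on_cylinder (f : Sigma -> R) (s : list bool) : Prop :=
  forall B, exists x, prefix s x /\ B < Rabs (f x).

Lemma unbounded_on_cylinder_snoc f s : unbounded_on_cylinder f s ->
  unbounded_on_cylinder f (s ++ [false]) \/ unbounded_on_cylinder f (s ++ [true]).
Proof.
  intros H. apply NNPP. intros Hn. apply not_or_and in Hn. destruct Hn as [H1 H2].
  apply not_all_ex_not in H1. destruct H1 as [B1 H1].
  apply not_all_ex_not in H2. destruct H2 as [B2 H2].
  destruct (H (Rmax B1 B2)) as [x [Hx HB]].
  pose proof (Rmax_l B1 B2). pose proof (Rmax_r B1 B2).
  destruct (x (length s)) eqn:E; [apply H2 | apply H1];
    exists x; (split; [apply prefix_snoc; auto | lra]).
Qed.

(* König's lemma along the binary tree of cylinders. *)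
Fixpoint unbounded_branch (f : Sigma -> R) (n : nat) : list bool :=
  match n with
  | O => []
  | S m => let s := unbounded_branch f m in
           if excluded_middle_informative (unbounded_on_cylinder f (s ++ [false]))
           then s ++ [false] else s ++ [true]
  end.

Lemma unbounded_branch_spec f n :
  unbounded_on_cylinder f [] -> unbounded_on_cylinder f (unbounded_branch f n).
Proof.
  intros H0. induction n; simpl; auto.
  destruct (excluded_middle_informative _); auto.
  destruct (unbounded_on_cylinder_snoc f _ IHn); tauto.
Qed.

Lemma length_unbounded_branch f n : length (unbounded_branch f n) = n.
Proof.
  induction n; simpl; auto.
  destruct (excluded_middle_informative _); rewrite length_app; simpl; lia.
Qed.

Lemma unbounded_branch_extends f m j : exists t, unbounded_branch f (m + j) = unbounded_branch f m ++ t.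
Proof.
  induction j as [|j [t Ht]].
  - exists []. rewrite Nat.add_0_r, app_nil_r. auto.
  - rewrite Nat.add_succ_r. simpl.
    destruct (excluded_middle_informative _); rewrite Ht, <- app_assoc; eexists; eauto.
Qed.

Lemma continuous_bounded f : continuous_S f -> exists B, forall x, Rabs (f x) <= B.
Proof.
  intros Hf. apply NNPP. intros Hunb.
  assert (H0 : unbounded_on_cylinder f []).
  { intros B. apply NNPP. intros HB. apply Hunb. exists B. intros x.
    apply Rnot_lt_le. intros Hx. apply HB. exists x. split; auto.
    intros k Hk. simpl in Hk. lia. }
  set (z := fun k => nth k (unbounded_branch f (S k)) false).
  assert (Hz : forall n, prefix (unbounded_branch f n) z).
  { intros n k Hk. rewrite length_unbounded_branch in Hk. unfold z.
    destruct (unbounded_branch_extends f (S k) (n - S k)) as [t Ht].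
    replace (S k + (n - S k))%nat with n in Ht by lia.
    rewrite Ht, app_nth1; auto. rewrite length_unbounded_branch. lia. }
  destruct (Hf z 1 ltac:(lra)) as [n Hn].
  destruct (unbounded_branch_spec f n H0 (Rabs (f z) + 1)) as [x [Hx Hbig]].
  assert (Hag : agree n z x).
  { intros k Hk. rewrite <- (Hz n k) by (rewrite length_unbounded_branch; auto).
    apply Hx. rewrite length_unbounded_branch; auto. }
  specialize (Hn x Hag). pose proof (Rabs_triang_inv (f x) (f z)). lra.
Qed.

Lemma continuous_pos_near_finite (f : Sigma -> R) (Q : Sigma -> Prop) (l : list Sigma) :
  continuous_S f -> (forall x, In x l -> Q x -> 0 < f x) ->
  exists c n, 0 < c /\ forall x z, In x l -> Q x -> agree n z x -> c <= f z.
Proof.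
  intros Hf. induction l as [|x0 l IH]; intros Hpos.
  { exists 1, 0%nat. split; [lra|]. intros x z []. }
  destruct IH as [c [n [Hc Hl]]]; [intros x Hx; apply Hpos; right; auto|].
  destruct (classic (Q x0)) as [HQ|HQ].
  - assert (Hx0 : 0 < f x0) by (apply Hpos; [left|]; auto).
    destruct (Hf x0 (f x0 / 2) ltac:(lra)) as [n0 Hn0].
    exists (Rmin c (f x0 / 2)), (n + n0)%nat.
    split; [apply Rmin_pos; lra|].
    pose proof (Rmin_l c (f x0 / 2)). pose proof (Rmin_r c (f x0 / 2)).
    intros x z [<-|Hx] HQx Hag.
    + specialize (Hn0 z (agree_sym _ _ _ (agree_le n0 (n + n0) _ _ ltac:(lia) Hag))).
      apply Rabs_def2 in Hn0. lra.
    + specialize (Hl x z Hx HQx (agree_le n (n + n0) _ _ ltac:(lia) Hag)). lra.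
  - exists c, n. split; auto. intros x z [<-|Hx] HQx Hag; [tauto|]. apply (Hl x); auto.
Qed.

Fixpoint sumN (N : nat) (h : nat -> R) : R :=
  match N with O => 0 | S n => sumN n h + h n end.

Lemma sumN_ext N h g : (forall i, (i < N)%nat -> h i = g i) -> sumN N h = sumN N g.
Proof. induction N; intros H; simpl; auto. rewrite IHN, H; auto. Qed.

Lemma sumN_plus N h g : sumN N (fun i => h i + g i) = sumN N h + sumN N g.
Proof. induction N; simpl; try rewrite IHN; lra. Qed.

Lemma sumN_minus N h g : sumN N (fun i => h i - g i) = sumN N h - sumN N g.
Proof. induction N; simpl; try rewrite IHN; lra. Qed.

Lemma sumN_scal N c h : sumN N (fun i => c * h i) = c * sumN N h.
Proof. induction N; simpl; try rewrite IHN; lra. Qed.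

Lemma sumN_const N c : sumN N (fun _ => c) = INR N * c.
Proof. induction N; simpl sumN; try rewrite IHN; rewrite ?S_INR; simpl; lra. Qed.

Lemma sumN_succ_l N h : sumN (S N) h = h 0%nat + sumN N (fun i => h (S i)).
Proof. induction N; simpl in *; try rewrite IHN; lra. Qed.

Lemma sumN_telescope N h : sumN N (fun i => h (S i) - h i) = h N - h 0%nat.
Proof. induction N; simpl; try rewrite IHN; lra. Qed.

Lemma sumN_nonneg N h : (forall i, 0 <= h i) -> 0 <= sumN N h.
Proof. intros H. induction N; simpl; [lra|]. pose proof (H N). lra. Qed.

Lemma sumN_le N h g : (forall i, h i <= g i) -> sumN N h <= sumN N g.
Proof. intros H. induction N; simpl; [lra|]. pose proof (H N). lra. Qed.

Lemma sumN_le_mono N M h : (forall i, 0 <= h i) -> (N <= M)%nat -> sumN N h <= sumN M h.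
Proof. intros H HNM. induction HNM; simpl; [lra|]. pose proof (H m). lra. Qed.

Lemma sumN_sum_f_R0 n h : sumN (S n) h = sum_f_R0 h n.
Proof. induction n; simpl in *; [lra|]. rewrite <- IHn. reflexivity. Qed.

Lemma Rabs_sumN_le N h c : (forall i, Rabs (h i) <= c) -> Rabs (sumN N h) <= INR N * c.
Proof.
  intros H. induction N; simpl sumN.
  - rewrite Rabs_R0. simpl. lra.
  - rewrite S_INR. pose proof (Rabs_triang (sumN N h) (h N)). pose proof (H N). lra.
Qed.

Lemma Rabs_average_le N h c : (0 < N)%nat -> (forall i, Rabs (h i) <= c) ->
  Rabs (/ INR N * sumN N h) <= c.
Proof.
  intros HN H. assert (HN' : 0 < INR N) by (apply lt_0_INR; auto).
  rewrite Rabs_mult, Rabs_inv, (Rabs_right (INR N)) by lra.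
  apply (Rmult_le_reg_l (INR N)); auto.
  rewrite <- Rmult_assoc, Rinv_r by lra. pose proof (Rabs_sumN_le N h c H). lra.
Qed.

Definition sumL {A} (l : list A) (g : A -> R) : R := fold_right Rplus 0 (map g l).

Lemma sumL_ext_in {A} (l : list A) g h :
  (forall x, In x l -> g x = h x) -> sumL l g = sumL l h.
Proof.
  unfold sumL. induction l as [|a l IH]; intros H; simpl; auto.
  rewrite H, IH; [reflexivity | intros x Hx; apply H; right; exact Hx | left; reflexivity].
Qed.

Lemma sumL_scal {A} (l : list A) c g : sumL l (fun x => c * g x) = c * sumL l g.
Proof. unfold sumL. induction l; simpl; try rewrite IHl; lra. Qed.

Lemma sumL_flat_map_pair {A B} (l : list A) (a b : A -> B) g :
  sumL (flat_map (fun s => [a s; b s]) l) g = sumL l (fun s => g (a s) + g (b s)).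
Proof. unfold sumL. induction l; simpl; try rewrite IHl; lra. Qed.

Lemma sumL_pos_exists {A} (l : list A) g : 0 < sumL l g -> exists x, In x l /\ 0 < g x.
Proof.
  unfold sumL. induction l as [|a l IH]; simpl; intros H; [lra|].
  destruct (Rlt_dec 0 (g a)); [exists a; auto|].
  destruct IH as [x [Hx Hg]]; [lra|]. exists x; auto.
Qed.

Lemma sumL_sumN {A} (l : list A) N (h : nat -> A -> R) :
  sumL l (fun s => sumN N (fun i => h i s)) = sumN N (fun i => sumL l (h i)).
Proof.
  unfold sumL. induction l; simpl.
  - induction N as [|N IHN]; simpl; [reflexivity|]. rewrite <- IHN. lra.
  - rewrite IHl, <- sumN_plus. reflexivity.
Qed.

Lemma Un_cv_sumL {A} (l : list A) (a : nat -> A -> R) (b : A -> R) :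
  (forall s, In s l -> Un_cv (fun j => a j s) (b s)) ->
  Un_cv (fun j => sumL l (a j)) (sumL l b).
Proof.
  unfold sumL. induction l; intros H; simpl.
  - intros eps He. exists 0%nat. intros. unfold Rdist. rewrite Rminus_0_r, Rabs_R0. lra.
  - apply CV_plus; [apply H; left; reflexivity|]. apply IHl. intros; apply H; right; auto.
Qed.

Definition indP (P : Prop) : R := if excluded_middle_informative P then 1 else 0.

Lemma indP_true (P : Prop) : P -> indP P = 1.
Proof. intros H. unfold indP. destruct (excluded_middle_informative P); tauto. Qed.

Lemma indP_false (P : Prop) : ~ P -> indP P = 0.
Proof. intros H. unfold indP. destruct (excluded_middle_informative P); tauto. Qed.

Lemma indP_01 P : 0 <= indP P <= 1.
Proof. unfold indP. destruct (excluded_middle_informative P); lra. Qed.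

Lemma indP_iff (P Q : Prop) : (P <-> Q) -> indP P = indP Q.
Proof.
  intros H. unfold indP.
  destruct (excluded_middle_informative P), (excluded_middle_informative Q); tauto.
Qed.

Lemma indP_and P Q : indP (P /\ Q) = indP P * indP Q.
Proof.
  unfold indP. destruct (excluded_middle_informative P), (excluded_middle_informative Q),
    (excluded_middle_informative (P /\ Q)); try tauto; lra.
Qed.

Lemma indP_bool_select (b : bool) (g : bool -> R) :
  indP (b = false) * g false + indP (b = true) * g true = g b.
Proof.
  destruct b.
  - rewrite (indP_false (true = false)), (indP_true (true = true)); congruence || lra.
  - rewrite (indP_true (false = false)), (indP_false (false = true)); congruence || lra.
Qed.

Lemma indP_prefix_snoc s b z :
  indP (prefix (s ++ [b]) z) = indP (prefix s z) * indP (z (length s) = b).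
Proof. rewrite <- indP_and. apply indP_iff, prefix_snoc. Qed.

Lemma indP_prefix_split s z :
  indP (prefix s z) = indP (prefix (s ++ [false]) z) + indP (prefix (s ++ [true]) z).
Proof.
  rewrite !indP_prefix_snoc. pose proof (indP_bool_select (z (length s)) (fun _ => 1)). nra.
Qed.

Lemma indP_prefix_preimage s z :
  indP (prefix (false :: s) z) + indP (prefix (true :: s) z) = indP (prefix s (shift z)).
Proof.
  rewrite !(indP_iff _ _ (prefix_cons _ s z)), !indP_and.
  pose proof (indP_bool_select (z 0%nat) (fun _ => 1)). nra.
Qed.

Lemma length_words n s : In s (words n) -> length s = n.
Proof.
  revert s. induction n; simpl; intros s Hs.
  - destruct Hs as [<-|[]]; auto.
  - apply in_flat_map in Hs. destruct Hs as [t [Ht Hs]].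
    simpl in Hs. destruct Hs as [<-|[<-|[]]]; rewrite length_app; simpl; rewrite IHn; auto; lia.
Qed.

Lemma sum_words_prefix n z (g : list bool -> R) :
  sumL (words n) (fun s => indP (prefix s z) * g s) = g (take n z).
Proof.
  revert g. induction n; intros g.
  - unfold sumL. simpl. rewrite indP_true; [unfold take; simpl; lra|].
    intros k Hk; simpl in Hk; lia.
  - simpl words. rewrite sumL_flat_map_pair, take_S, <- (IHn (fun s => g (s ++ [z n]))).
    apply sumL_ext_in. intros s Hs. rewrite !indP_prefix_snoc, (length_words n s Hs).
    rewrite <- (indP_bool_select (z n) (fun b => g (s ++ [b]))). ring.
Qed.

Lemma Un_cv_const c : Un_cv (fun _ => c) c.
Proof. intros eps He. exists 0%nat. intros. unfold Rdist. rewrite Rminus_diag, Rabs_R0. lra. Qed.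

Lemma Un_cv_Rabs_le a b la lb c : Un_cv a la -> Un_cv b lb ->
  (forall j, Rabs (a j - b j) <= c) -> Rabs (la - lb) <= c.
Proof.
  intros Ha Hb H. pose proof (CV_minus _ _ _ _ Ha Hb) as Hd.
  assert (Hbounds : forall j, - c <= a j - b j <= c).
  { intros j. specialize (H j). pose proof (Rle_abs (a j - b j)).
    pose proof (Rle_abs (- (a j - b j))). rewrite Rabs_Ropp in *. lra. }
  apply Rabs_le. split.
  - apply (Rle_cv_lim (Un := fun _ => - c) (Vn := fun j => a j - b j));
      [intros j; apply Hbounds | apply Un_cv_const | exact Hd].
  - apply (Rle_cv_lim (Un := fun j => a j - b j) (Vn := fun _ => c));
      [intros j; apply Hbounds | exact Hd | apply Un_cv_const].
Qed.

Lemma infinite_sum_terms_small (f : nat -> R) l : infinite_sum f l ->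
  forall eps, 0 < eps -> exists T, forall t, (T <= t)%nat -> Rabs (f t) < eps.
Proof.
  intros H eps He. destruct (H (eps / 2) ltac:(lra)) as [N HN]. exists (S N).
  intros [|t] Ht; [lia|].
  pose proof (HN (S t) ltac:(lia)) as H1. pose proof (HN t ltac:(lia)) as H2.
  unfold Rdist in *. simpl sum_f_R0 in H1.
  apply Rabs_def2 in H1. apply Rabs_def2 in H2. apply Rabs_def1; lra.
Qed.

Lemma Un_cv_inv_INR (T : nat -> nat) : (forall j, (j < T j)%nat) ->
  Un_cv (fun j => / INR (T j)) 0.
Proof.
  intros HT eps He. destruct (RinvN_cv He) as [N HN]. exists N. intros j Hj.
  specialize (HN j Hj). unfold Rdist in *. rewrite Rminus_0_r in *. simpl in HN.
  assert (HTj : INR j + 1 <= INR (T j)) by (rewrite <- S_INR; apply le_INR, HT).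
  pose proof (pos_INR j).
  rewrite Rabs_right in * by (apply Rle_ge, Rlt_le, Rinv_0_lt_compat; lra).
  apply Rle_lt_trans with (/ (INR j + 1)); auto. apply Rinv_le_contravar; lra.
Qed.

Lemma Un_cv_inv_INR_mult (T : nat -> nat) (x : nat -> R) K : (forall j, (j < T j)%nat) ->
  (forall j, Rabs (x j) <= K) -> Un_cv (fun j => / INR (T j) * x j) 0.
Proof.
  intros HT Hx eps He.
  assert (HK : 0 <= K) by (pose proof (Hx 0%nat); pose proof (Rabs_pos (x 0%nat)); lra).
  destruct (Un_cv_inv_INR T HT (eps / (K + 1))) as [N HN]; [apply Rdiv_lt_0_compat; lra|].
  exists N. intros j Hj. specialize (HN j Hj). specialize (Hx j).
  unfold Rdist in *. rewrite Rminus_0_r in *. rewrite Rabs_mult.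
  assert (Heps : eps / (K + 1) * (K + 1) = eps) by (field; lra).
  pose proof (Rabs_pos (/ INR (T j))). pose proof (Rabs_pos (x j)). nra.
Qed.

Definition strict_incr (phi : nat -> nat) : Prop := forall n, (phi n < phi (S n))%nat.

Lemma strict_incr_le phi : strict_incr phi -> forall a b, (a <= b)%nat -> (phi a <= phi b)%nat.
Proof. intros H a b Hab. induction Hab; [lia|]. specialize (H m). lia. Qed.

Lemma strict_incr_ge_id phi : strict_incr phi -> forall n, (n <= phi n)%nat.
Proof. intros H n. induction n; [lia|]. specialize (H n). lia. Qed.

Lemma strict_incr_comp phi chi :
  strict_incr phi -> strict_incr chi -> strict_incr (fun n => phi (chi n)).
Proof.
  intros Hphi Hchi n. pose proof (strict_incr_le phi Hphi _ _ (Hchi n)).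
  specialize (Hphi (chi n)). lia.
Qed.

(* The boundedness hypothesis sits inside the existential so that a subsequence can be
   chosen for every [v] at once. *)
Lemma subseq_cv_01 (v : nat -> R) : exists phi, strict_incr phi /\
  ((forall n, 0 <= v n <= 1) -> exists l, Un_cv (fun n => v (phi n)) l).
Proof.
  destruct (classic (forall n, 0 <= v n <= 1)) as [Hb|Hb];
    [|exists (fun n => n); split; [intros n; lia | tauto]].
  destruct (Bolzano_Weierstrass v _ (compact_P3 0 1) Hb) as [l Hl].
  assert (Hsel : forall N n, exists m, (N <= m)%nat /\ Rabs (v m - l) < RinvN n).
  { intros N n. apply (Hl (disc l (RinvN n)) N). exists (RinvN n). intros x Hx. exact Hx. }
  set (sel := fun N n => proj1_sig (constructive_indefinite_description _ (Hsel N n))).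
  assert (selP : forall N n, (N <= sel N n)%nat /\ Rabs (v (sel N n) - l) < RinvN n)
    by (intros N n; unfold sel; destruct (constructive_indefinite_description _ _); auto).
  set (phi := fix phi n := match n with O => sel 0%nat 0%nat | S m => sel (S (phi m)) (S m) end).
  exists phi. split.
  - intros n. simpl. destruct (selP (S (phi n)) (S n)). lia.
  - intros _. exists l. intros eps He. destruct (RinvN_cv He) as [N HN].
    exists N. intros n Hn. specialize (HN n Hn). unfold Rdist in *.
    rewrite Rminus_0_r, Rabs_right in HN by (apply Rle_ge, Rlt_le, cond_pos).
    assert (Rabs (v (phi n) - l) < RinvN n) by (destruct n; apply selP).
    lra.
Qed.

Lemma diagonal_subseq (u : nat -> list bool -> R) : (forall j s, 0 <= u j s <= 1) ->
  exists D : nat -> nat, (forall j, (j <= D j)%nat) /\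
    forall s, exists l, Un_cv (fun j => u (D j) s) l.
Proof.
  intros Hu.
  set (sel := fun v => proj1_sig (constructive_indefinite_description _ (subseq_cv_01 v))).
  assert (selP : forall v, strict_incr (sel v) /\
      ((forall n, 0 <= v n <= 1) -> exists l, Un_cv (fun n => v (sel v n)) l))
    by (intros v; unfold sel; destruct (constructive_indefinite_description _ _); auto).
  (* [Phi m] refines [Phi (m - 1)] so that [u _ (word_of_nat m)] converges along it. *)
  set (Phi := fix Phi m := match m with
          | O => sel (fun j => u j (word_of_nat 0))
          | S m' => fun j => Phi m' (sel (fun i => u (Phi m' i) (word_of_nat (S m'))) j)
          end).
  assert (Phi_incr : forall m, strict_incr (Phi m)).
  { induction m; simpl; [apply selP|]. apply strict_incr_comp; auto. apply selP. }
  assert (Phi_cv : forall m, exists l, Un_cv (fun j => u (Phi m j) (word_of_nat m)) l).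
  { destruct m; simpl.
    - apply (proj2 (selP (fun j => u j (word_of_nat 0)))); intros; apply Hu.
    - apply (proj2 (selP (fun i => u (Phi m i) (word_of_nat (S m))))); intros; apply Hu. }
  assert (Phi_refines : forall m d, exists chi, strict_incr chi /\
            forall i, Phi (m + d)%nat i = Phi m (chi i)).
  { intros m d. induction d as [|d [chi [Hchi Hc]]].
    - exists (fun i => i). split; [intros n; lia|]. intros i. rewrite Nat.add_0_r. auto.
    - exists (fun i => chi (sel (fun i => u (Phi (m + d)%nat i) (word_of_nat (S (m + d)))) i)).
      split; [apply strict_incr_comp; auto; apply selP|].
      intros i. rewrite Nat.add_succ_r. simpl. rewrite Hc. reflexivity. }
  exists (fun j => Phi j j). split; [intros j; apply strict_incr_ge_id, Phi_incr|].
  intros s. destruct (word_of_nat_surj s) as [m <-].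
  destruct (Phi_cv m) as [l Hl]. exists l. intros eps He.
  destruct (Hl eps He) as [N HN]. exists (N + m)%nat. intros j Hj.
  destruct (Phi_refines m (j - m)%nat) as [chi [Hchi Hc]].
  replace (m + (j - m))%nat with j in Hc by lia. rewrite Hc.
  apply HN. pose proof (strict_incr_ge_id chi Hchi j). lia.
Qed.

Lemma Un_cv_unique_ext (a b : nat -> R) la lb :
  Un_cv a la -> Un_cv b lb -> (forall j, a j = b j) -> la = lb.
Proof. intros Ha Hb H. apply (UL_sequence b); auto. apply (Un_cv_ext a); auto. Qed.

Definition empirical (w : Sigma) (N : nat) (s : list bool) : R :=
  / INR N * sumN N (fun i => indP (prefix s (shiftn i w))).

Lemma empirical_01 w N s : (0 < N)%nat -> 0 <= empirical w N s <= 1.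
Proof.
  intros HN. unfold empirical. assert (HN' : 0 < INR N) by (apply lt_0_INR; auto).
  assert (Hsum : 0 <= sumN N (fun i => indP (prefix s (shiftn i w))) <= INR N).
  { split; [apply sumN_nonneg; intros; apply indP_01|].
    rewrite <- (Rmult_1_r (INR N)), <- sumN_const. apply sumN_le. intros; apply indP_01. }
  split; [apply Rmult_le_pos; [apply Rlt_le, Rinv_0_lt_compat; auto | lra]|].
  apply (Rmult_le_reg_l (INR N)); auto. rewrite <- Rmult_assoc, Rinv_r by lra. lra.
Qed.

Lemma empirical_nil w N : (0 < N)%nat -> empirical w N [] = 1.
Proof.
  intros HN. unfold empirical. rewrite (sumN_ext _ _ (fun _ => 1)), sumN_const.
  - field. apply not_0_INR. lia.
  - intros i _. apply indP_true. intros k Hk. simpl in Hk. lia.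
Qed.

Lemma empirical_split w N s :
  empirical w N s = empirical w N (s ++ [false]) + empirical w N (s ++ [true]).
Proof.
  unfold empirical. rewrite <- Rmult_plus_distr_l, <- sumN_plus. f_equal.
  apply sumN_ext. intros i _. apply indP_prefix_split.
Qed.

Lemma empirical_preimage w N s :
  empirical w N s - (empirical w N (false :: s) + empirical w N (true :: s)) =
  / INR N * (indP (prefix s w) - indP (prefix s (shiftn N w))).
Proof.
  unfold empirical. rewrite <- Rmult_plus_distr_l, <- !Rmult_minus_distr_l. f_equal.
  assert (Hpre : sumN N (fun i => indP (prefix (false :: s) (shiftn i w))) +
                 sumN N (fun i => indP (prefix (true :: s) (shiftn i w))) =
                 sumN N (fun i => indP (prefix s (shiftn (S i) w)))).
  { rewrite <- sumN_plus. apply sumN_ext. intros i _.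
    rewrite indP_prefix_preimage, shift_shiftn. reflexivity. }
  pose proof (sumN_succ_l N (fun i => indP (prefix s (shiftn i w)))) as Hsucc.
  change (sumN (S N) ?h) with (sumN N h + h N) in Hsucc.
  cbv beta in Hsucc. rewrite shiftn_0 in Hsucc. lra.
Qed.

Lemma sum_words_empirical w N n (g : list bool -> R) :
  sumL (words n) (fun s => empirical w N s * g s) =
  / INR N * sumN N (fun i => g (take n (shiftn i w))).
Proof.
  unfold empirical.
  rewrite (sumL_ext_in _ _ (fun s => / INR N * sumN N (fun i => indP (prefix s (shiftn i w)) * g s))).
  - rewrite sumL_scal, sumL_sumN. f_equal. apply sumN_ext. intros i _. apply sum_words_prefix.
  - intros s _. rewrite Rmult_assoc, <- (Rmult_comm (g s)), <- sumN_scal. f_equal.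
    apply sumN_ext. intros; ring.
Qed.

Lemma empirical_limit_point w M : exists (T : nat -> nat) (nu : list bool -> R),
  (forall j, (M + j < T j)%nat) /\ forall s, Un_cv (fun j => empirical w (T j) s) (nu s).
Proof.
  destruct (diagonal_subseq (fun j s => empirical w (S (M + j)) s)) as [D [HD Hcv]].
  { intros j s. apply empirical_01. lia. }
  exists (fun j => S (M + D j)), (fun s => proj1_sig (constructive_indefinite_description _ (Hcv s))).
  split; [intros j; specialize (HD j); lia|].
  intros s. destruct (constructive_indefinite_description _ _) as [l Hl]. exact Hl.
Qed.

Section EmpiricalLimit.

Variables (w : Sigma) (T : nat -> nat) (nu : list bool -> R).
Hypothesis HT : forall j, (j < T j)%nat.
Hypothesis Hnu : forall s, Un_cv (fun j => empirical w (T j) s) (nu s).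

Lemma empirical_limit_invariant : is_invariant_prob nu.
Proof.
  assert (HT0 : forall j, (0 < T j)%nat) by (intros j; specialize (HT j); lia).
  split; [split; [|split]|].
  - apply (Un_cv_unique_ext _ _ _ _ (Hnu []) (Un_cv_const 1)).
    intros j. apply empirical_nil, HT0.
  - intros s. apply (Rle_cv_lim (Un := fun _ => 0) (Vn := fun j => empirical w (T j) s));
      [intros j; apply empirical_01, HT0 | apply Un_cv_const | apply Hnu].
  - intros s. apply (Un_cv_unique_ext _ _ _ _ (Hnu s)
      (CV_plus _ _ _ _ (Hnu (s ++ [false])) (Hnu (s ++ [true])))).
    intros j. apply empirical_split.
  - intros s.
    assert (Hdefect : Un_cv (fun j => / INR (T j) *
              (indP (prefix s w) - indP (prefix s (shiftn (T j) w)))) 0).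
    { apply (Un_cv_inv_INR_mult T _ 1 HT). intros j. apply Rabs_le.
      pose proof (indP_01 (prefix s w)). pose proof (indP_01 (prefix s (shiftn (T j) w))). lra. }
    assert (Hlim := Un_cv_unique_ext _ _ _ _ (CV_minus _ _ _ _ (Hnu s)
              (CV_plus _ _ _ _ (Hnu (false :: s)) (Hnu (true :: s)))) Hdefect
              (fun j => empirical_preimage w (T j) s)).
    lra.
Qed.

Lemma empirical_limit_cylinder_sum k (g : list bool -> R) :
  Un_cv (fun j => / INR (T j) * sumN (T j) (fun i => g (take k (shiftn i w))))
        (sumL (words k) (fun s => nu s * g s)).
Proof.
  apply (Un_cv_ext (fun j => sumL (words k) (fun s => empirical w (T j) s * g s))).
  - intros j. apply sum_words_empirical.
  - apply Un_cv_sumL. intros s _. apply CV_mult; [apply Hnu | apply Un_cv_const].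
Qed.

Lemma empirical_limit_integral f L : Holder f ->
  Un_cv (fun j => / INR (T j) * sumN (T j) (fun i => f (shiftn i w))) L ->
  integral_is nu f L.
Proof.
  intros Hf HL eps He.
  destruct (Holder_uniformly_continuous f Hf (eps / 2) ltac:(lra)) as [n0 Hn0].
  exists n0. intros n Hn. unfold Rdist.
  assert (Hclose : Rabs (riemann_sum nu f n - L) <= eps / 2).
  { apply (Un_cv_Rabs_le _ _ _ _ _ (empirical_limit_cylinder_sum n (fun s => f (ext s))) HL).
    intros j. rewrite <- Rmult_minus_distr_l, <- sumN_minus.
    apply Rabs_average_le; [specialize (HT j); lia|].
    intros i. apply Rlt_le, Hn0. intros m Hm. unfold ext. apply nth_take. lia. }
  lra.
Qed.

End EmpiricalLimit.

Section CalibratedSubaction.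

Variables Astar Vstar : Sigma -> R.
Hypothesis HAstar : Holder Astar.
Hypothesis HVstar : calibrated_subaction Astar Vstar.

Lemma Rstar_nonneg w : 0 <= Rstar Astar Vstar w.
Proof.
  destruct HVstar as [_ Hcal].
  assert (Hbranch : forall b, Astar (cons_sym b (shift w)) + Vstar (cons_sym b (shift w)) <=
                              Vstar (shift w))
    by (intros []; rewrite (Hcal (shift w)); [apply Rmax_r | apply Rmax_l]).
  specialize (Hbranch (w 0%nat)). rewrite cons_sym_shift in Hbranch.
  unfold Rstar. lra.
Qed.

Lemma Rstar_continuous : continuous_S (Rstar Astar Vstar).
Proof.
  intros x eps He. destruct HVstar as [HV _].
  destruct (HV (shift x) (eps / 3) ltac:(lra)) as [n1 H1].
  destruct (HV x (eps / 3) ltac:(lra)) as [n2 H2].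
  destruct (Holder_continuous Astar HAstar x (eps / 3) ltac:(lra)) as [n3 H3].
  exists (S n1 + n2 + n3)%nat. intros y Hy.
  set (n := (S n1 + n2 + n3)%nat) in Hy.
  specialize (H1 (shift y) (agree_shift _ _ _ (agree_le (S n1) n _ _ ltac:(lia) Hy))).
  specialize (H2 y (agree_le n2 n _ _ ltac:(lia) Hy)).
  specialize (H3 y (agree_le n3 n _ _ ltac:(lia) Hy)).
  unfold Rstar. apply Rabs_def2 in H1. apply Rabs_def2 in H2. apply Rabs_def2 in H3.
  apply Rabs_def1; lra.
Qed.

Lemma Birkhoff_sum_Astar w N :
  sumN N (fun i => Astar (shiftn i w)) =
  Vstar (shiftn N w) - Vstar w - sumN N (fun i => Rstar Astar Vstar (shiftn i w)).
Proof.
  rewrite <- (shiftn_0 w) at 2. rewrite <- (sumN_telescope N (fun i => Vstar (shiftn i w))).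
  rewrite <- sumN_minus. apply sumN_ext. intros i _. unfold Rstar. rewrite shift_shiftn. ring.
Qed.

Lemma partial_Istar_le w l : Istar_is Astar Vstar w l ->
  forall N, 0 <= sumN N (fun i => Rstar Astar Vstar (shiftn i w)) <= l.
Proof.
  intros Hl N. split; [apply sumN_nonneg; intros; apply Rstar_nonneg|].
  apply Rle_trans with (sumN (S N) (fun i => Rstar Astar Vstar (shiftn i w))).
  - simpl. pose proof (Rstar_nonneg (shiftn N w)). lra.
  - rewrite sumN_sum_f_R0. apply growing_ineq; auto.
    intros n. simpl. pose proof (Rstar_nonneg (shiftn (S n) w)). lra.
Qed.

Lemma Birkhoff_average_Astar w l (T : nat -> nat) : Istar_is Astar Vstar w l ->
  (forall j, (j < T j)%nat) ->
  Un_cv (fun j => / INR (T j) * sumN (T j) (fun i => Astar (shiftn i w))) 0.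
Proof.
  intros Hl HT. destruct (continuous_bounded Vstar (proj1 HVstar)) as [B HB].
  apply (Un_cv_inv_INR_mult T _ (2 * B + l) HT). intros j.
  rewrite Birkhoff_sum_Astar. pose proof (partial_Istar_le w l Hl (T j)).
  pose proof (Rle_abs (Vstar (shiftn (T j) w))). pose proof (Rle_abs (- Vstar (shiftn (T j) w))).
  pose proof (Rle_abs (Vstar w)). pose proof (Rle_abs (- Vstar w)). rewrite !Rabs_Ropp in *.
  pose proof (HB (shiftn (T j) w)). pose proof (HB w). apply Rabs_le. lra.
Qed.

Lemma empirical_limit_maximizing w l (T : nat -> nat) (nu : list bool -> R) :
  Istar_is Astar Vstar w l -> (forall j, (j < T j)%nat) ->
  (forall s, Un_cv (fun j => empirical w (T j) s) (nu s)) ->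
  maximizing_prob Astar 0 nu.
Proof.
  intros Hl HT Hnu. split; [apply (empirical_limit_invariant w T); auto|].
  apply (empirical_limit_integral w T); auto. apply (Birkhoff_average_Astar w l); auto.
Qed.

Lemma no_positive_density_off_orbit p k w l d N1 :
  (forall mu, maximizing_prob Astar 0 mu -> supported_on mu (in_orbit p)) ->
  Istar_is Astar Vstar w l -> 0 < d ->
  ~ (forall N, (N1 <= N)%nat ->
       d * INR N <= sumN N (fun i => indP (~ near_orbit p k (shiftn i w)))).
Proof.
  intros Hsupp Hl Hd Hdens.
  set (off := fun s => ~ exists q, in_orbit p q /\ prefix s q).
  destruct (empirical_limit_point w N1) as [T [nu [HT Hnu]]].
  assert (HT' : forall j, (j < T j)%nat) by (intros j; specialize (HT j); lia).
  assert (Hmax := empirical_limit_maximizing w l T nu Hl HT' Hnu).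
  assert (Hmass : d <= sumL (words k) (fun s => nu s * indP (off s))).
  { apply (Rle_cv_lim (Un := fun _ => d)
      (Vn := fun j => / INR (T j) * sumN (T j) (fun i => indP (off (take k (shiftn i w))))));
      [|apply Un_cv_const | exact (empirical_limit_cylinder_sum w T nu Hnu k (fun s => indP (off s)))].
    intros j. assert (HTj : 0 < INR (T j)) by (apply lt_0_INR; specialize (HT j); lia).
    rewrite (sumN_ext _ _ (fun i => indP (~ near_orbit p k (shiftn i w)))).
    - apply (Rmult_le_reg_l (INR (T j))); auto.
      rewrite <- Rmult_assoc, Rinv_r by lra. rewrite Rmult_1_l, Rmult_comm.
      apply Hdens. specialize (HT j). lia.
    - intros i _. apply indP_iff. unfold off, near_orbit.
      setoid_rewrite prefix_take. tauto. }
  destruct (sumL_pos_exists (words k) (fun s => nu s * indP (off s))) as [s [_ Hs]]; [lra|].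
  destruct (classic (off s)) as [Hoff|Hon].
  - rewrite indP_true in Hs by exact Hoff.
    destruct (Hsupp nu Hmax s ltac:(lra)) as [z Hz]. exact (Hoff (ex_intro _ z Hz)).
  - rewrite indP_false in Hs by exact Hon. lra.
Qed.

End CalibratedSubaction.

Lemma density_of_bounded_gaps (B : nat -> Prop) t0 g : (0 < g)%nat -> B t0 ->
  (forall t, (t0 <= t)%nat -> B t -> exists t', (t < t' <= t + g)%nat /\ B t') ->
  forall N, (2 * t0 < N)%nat -> / (2 * INR g) * INR N <= sumN N (fun i => indP (B i)).
Proof.
  intros Hg HB0 Hgap.
  assert (Hnonneg : forall i, 0 <= indP (B i)) by (intros; apply indP_01).
  assert (Hcount : forall m, exists t, (t0 <= t <= t0 + m * g)%nat /\ B t /\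
                     INR (S m) <= sumN (S t) (fun i => indP (B i))).
  { induction m as [|m [t [Ht [HBt Hc]]]].
    - exists t0. split; [lia|]. split; auto. simpl sumN. rewrite (indP_true (B t0)) by auto.
      pose proof (sumN_nonneg t0 _ Hnonneg). simpl. lra.
    - destruct (Hgap t ltac:(lia) HBt) as [t' [Ht' HBt']].
      exists t'. split; [nia|]. split; auto. simpl sumN. rewrite (indP_true (B t')) by auto.
      pose proof (sumN_le_mono (S t) t' _ Hnonneg ltac:(lia)). rewrite S_INR. lra. }
  intros N HN. set (m := ((N - t0 - 1) / g)%nat).
  destruct (Hcount m) as [t [Ht [_ Hc]]].
  assert (Hm1 : (m * g <= N - t0 - 1)%nat)
    by (unfold m; rewrite Nat.mul_comm; apply Nat.Div0.mul_div_le).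
  assert (Hm2 : (N - t0 - 1 < g * S m)%nat) by (unfold m; apply Nat.mul_succ_div_gt; lia).
  pose proof (sumN_le_mono (S t) N _ Hnonneg ltac:(nia)) as Hmono.
  assert (HNle : (N <= 2 * g * S m)%nat) by lia.
  apply le_INR in HNle. rewrite !mult_INR in HNle. replace (INR 2) with 2 in HNle by reflexivity.
  assert (Hg' : 0 < INR g) by (apply lt_0_INR; auto).
  apply (Rmult_le_reg_l (2 * INR g)); [lra|].
  rewrite <- Rmult_assoc, Rinv_r, Rmult_1_l by lra. nra.
Qed.

Lemma Rstar_bounded_below_near_entries Astar Vstar p per :
  Holder Astar -> calibrated_subaction Astar Vstar -> periodic p per ->
  (forall w, ~ in_orbit p w -> in_orbit p (shift w) -> 0 < Rstar Astar Vstar w) ->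
  exists c n, 0 < c /\ forall q b z, in_orbit p q -> ~ in_orbit p (cons_sym b q) ->
    agree n z (cons_sym b q) -> c <= Rstar Astar Vstar z.
Proof.
  intros HA HV Hper Hgood.
  destruct (continuous_pos_near_finite (Rstar Astar Vstar)
              (fun x => ~ in_orbit p x /\ in_orbit p (shift x)) (orbit_preimages p per)
              (Rstar_continuous Astar Vstar HA HV)) as [c [n [Hc Hbound]]].
  { intros x _ [Hx Hsx]. apply Hgood; auto. }
  exists c, n. split; auto. intros q b z Hq Hb Hag.
  apply (Hbound (cons_sym b q)); auto. apply cons_sym_in_orbit_preimages; auto.
Qed.

Lemma Istar_finite_eventually_in_orbit Astar Vstar p per w :
  Holder Astar -> calibrated_subaction Astar Vstar -> periodic p per ->
  (forall w, ~ in_orbit p w -> in_orbit p (shift w) -> 0 < Rstar Astar Vstar w) ->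
  (forall mu, maximizing_prob Astar 0 mu -> supported_on mu (in_orbit p)) ->
  Istar_finite Astar Vstar w -> exists N, in_orbit p (shiftn N w).
Proof.
  intros HA HV Hper Hgood Hsupp [l Hl]. apply NNPP. intros Hnever.
  set (k := S per). assert (Hk : (per < k)%nat) by lia.
  set (far := fun t => ~ near_orbit p k (shiftn t w)).
  assert (Hfar_often : forall N, exists t, (N <= t)%nat /\ far t).
  { intros N. apply NNPP. intros Hn. apply Hnever. exists N.
    apply (eventually_near_orbit p per Hper k w N Hk). intros i Hi.
    apply NNPP. intros Hu. apply Hn. exists i. auto. }
  destruct (Rstar_bounded_below_near_entries Astar Vstar p per HA HV Hper Hgood)
    as [c [n0 [Hc Hentry]]].
  destruct (infinite_sum_terms_small _ _ Hl c Hc) as [T HT].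
  assert (Hgap : forall t, (T <= t)%nat -> far t ->
                   exists t', (t < t' <= t + S n0)%nat /\ far t').
  { intros t Ht Hft. apply NNPP. intros Hn.
    destruct (entry_point_of_return p per Hper k n0 (shiftn t w) Hk Hft) as [q [b [Hq [Hb Hag]]]].
    { intros i Hi. rewrite shiftn_shiftn. apply NNPP. intros Hu.
      apply Hn. exists (t + S i)%nat. split; [lia | exact Hu]. }
    specialize (Hentry q b (shiftn t w) Hq Hb (agree_le n0 (S (n0 + k)) _ _ ltac:(lia) Hag)).
    specialize (HT t Ht). rewrite Rabs_right in HT by (apply Rle_ge, Rstar_nonneg; auto).
    lra. }
  destruct (Hfar_often T) as [t0 [Ht0 Hft0]].
  apply (no_positive_density_off_orbit Astar Vstar HA HV p k w l
           (/ (2 * INR (S n0))) (S (2 * t0)) Hsupp Hl).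
  - apply Rinv_0_lt_compat. pose proof (pos_INR n0). rewrite S_INR. lra.
  - intros N HN. apply (density_of_bounded_gaps far t0 (S n0)); [lia | exact Hft0 | | lia].
    intros t Ht. apply Hgap. lia.
Qed.

Theorem mainTheorem7
  (A Astar V Vstar : Sigma -> R) (W : Sigma -> Sigma -> R) (p : Sigma) (per : nat)
  (HA : Holder A) (HAstar : Holder Astar)
  (HW : involution_kernel A Astar W)
  (HmA : max_ergodic_value A 0) (HmAstar : max_ergodic_value Astar 0)
  (HV : calibrated_subaction A V) (HVstar : calibrated_subaction Astar Vstar)
  (HWnorm : W_normalized Astar V Vstar W)
  (Hper : periodic p per)
  (Hmax_ex : exists mu, maximizing_prob Astar 0 mu)
  (Hmax_uniq : forall mu1 mu2, maximizing_prob Astar 0 mu1 ->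
                 maximizing_prob Astar 0 mu2 -> forall s, mu1 s = mu2 s)
  (Hmax_supp : forall mu, maximizing_prob Astar 0 mu -> supported_on mu (in_orbit p))
  (Hgood : forall w, ~ in_orbit p w -> in_orbit p (shift w) ->
             0 < Rstar Astar Vstar w) :
  countable_set (Istar_finite Astar Vstar) /\
  countable_set (fun w => exists x, optimal_pair Astar V Vstar W x w).
Proof.
  assert (Hpreorbit : forall w, Istar_finite Astar Vstar w -> exists N, in_orbit p (shiftn N w))
    by (intros w; exact (Istar_finite_eventually_in_orbit Astar Vstar p per w
                           HAstar HVstar Hper Hgood Hmax_supp)).
  split; apply (countable_preorbit p); [exact Hpreorbit|].
  intros w [x [l [Hl _]]]. apply Hpreorbit. exists l. exact Hl.
Qed.
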